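(* A Tychonoff space $X$ is both a nowhere almost $P$-space and an almost $P$-space if and only if $X$ is discrete.
   Context: $C(X)$ is the ring of real-valued continuous functions on $X$; a zero set is $Z(h)=\{x: h(x)=0\}$ with $h\in C(X)$ and a cozero set is its complement. $T''(X)$ is the set of all functions $f\colon X\to\mathbb{R}$ for which there is a dense cozero set $U$ of $X$ with $f|_U$ continuous. $\chi_A$ is the characteristic function of $A$. $X$ is a nowhere almost $P$-space if $\chi_{\{p\}}\in T''(X)$ for all $p\in X$. $X$ is an almost $P$-space if every non-empty $G_\delta$-set (equivalently, for Tychonoff $X$, every non-empty zero set) has non-empty interior. *)

From HB Require Import structures.
From mathcomp Require Import all_boot all_order all_algebra.
From mathcomp Require Import all_classical all_reals all_analysis.
Set Implicit Arguments. Unset Strict Implicit. Unset Printing Implicit Defensive.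
Import Order.TTheory GRing.Theory Num.Theory.
Import numFieldNormedType.Exports.
Local Open Scope classical_set_scope.
Local Open Scope ring_scope.

Section Defs.
Context {R : realType} {X : topologicalType}.

Definition tychonoff_space : Prop :=
  hausdorff_space X /\
  forall (x : X) (B : set X), closed B -> ~ B x ->
    exists f : X -> R, [/\ continuous f, f x = 0 & forall y, B y -> f y = 1].

Definition zero_set (h : X -> R) : set X := [set x | h x = 0].

Definition is_zero_set (Z : set X) : Prop :=
  exists h : X -> R, continuous h /\ Z = zero_set h.

Definition is_cozero_set (U : set X) : Prop :=
  exists h : X -> R, continuous h /\ U = ~` zero_set h.

Definition in_T'' (f : X -> R) : Prop :=
  exists U : set X, is_cozero_set U /\ dense U /\ {within U, continuous f}.

Definition nowhere_almost_P_space : Prop :=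
  forall p : X, in_T'' (\1_[set p] : X -> R).

Definition almost_P_space : Prop :=
  forall Z : set X, is_zero_set Z -> Z !=set0 -> Z° !=set0.

Definition discrete_sp : Prop := forall A : set X, open A.

End Defs.

From mathcomp Require Import all_boot all_order all_algebra.
From mathcomp Require Import all_classical all_reals all_analysis.
Import Order.TTheory GRing.Theory Num.Theory.
Import numFieldNormedType.Exports.
Local Open Scope classical_set_scope.
Local Open Scope ring_scope.

(* In an almost P-space a dense cozero set U is all of X: otherwise its
   complement is a non-empty zero set whose interior misses the dense set U.
   So if the indicator of p is continuous on a dense cozero set, it is
   continuous on X and {p} = preimage of R \ {0} is open.  The converse holds
   because on a discrete space every function is continuous and every set is
   open. *)

Section NowhereAlmostPSpace.
Context {R : realType} {X : topologicalType}.

Lemma open_setC0 : open (~` [set 0 : R]).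
Proof. by rewrite openC; apply: closed_eq. Qed.

Lemma cozero_set_open (U : set X) : is_cozero_set (R := R) U -> open U.
Proof.
move=> [h [hc ->]].
by apply: (@open_comp _ _ h (~` [set 0])) => [x _|]; [exact: hc | exact: open_setC0].
Qed.

Lemma cozero_setC (U : set X) :
  is_cozero_set (R := R) U -> is_zero_set (R := R) (~` U).
Proof. by move=> [h [hc ->]]; exists h; rewrite setCK. Qed.

Lemma dense_interiorC (U : set X) : dense U -> (~` U)° = set0.
Proof.
move=> dU; apply/seteqP; split => // x.
rewrite /interior nbhsE => -[V [oV Vx] VUc].
have [y [Vy Uy]] := dU V (ex_intro _ x Vx) oV.
exact: VUc Vy Uy.
Qed.

Lemma almost_P_dense_cozero_setT (U : set X) :
  almost_P_space (R := R) (X := X) -> is_cozero_set (R := R) U -> dense U -> U = setT.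
Proof.
move=> AP cozU dU; apply/seteqP; split => // x _.
apply: contrapT => Ux.
have [y] := AP _ (cozero_setC _ cozU) (ex_intro _ x Ux).
by rewrite dense_interiorC.
Qed.

Lemma open_set1_within_indic {U : set X} {p : X} :
  open U -> U p -> {within U, continuous (\1_[set p] : X -> R)} -> open [set p].
Proof.
move=> oU Up; rewrite continuous_open_subspace // => /(continuous_inP _ oU).
move=> /(_ _ open_setC0); rewrite preimage_indic.
rewrite mem_set /=; last exact/eqP/oner_neq0.
rewrite memNset /=; last by [].
by rewrite setIidr // => y ->.
Qed.

Lemma open_set1_discrete_sp : (forall p : X, open [set p]) -> discrete_sp (X := X).
Proof.
move=> op1 A; rewrite openE => x Ax.
by apply: (@filterS _ _ _ [set x]) => [y ->|]; last exact: open_nbhs_nbhs.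
Qed.

Lemma discrete_sp_in_T'' (f : X -> R) : discrete_sp (X := X) -> in_T'' f.
Proof.
move=> D; exists setT; split; [|split].
- exists (cst 1); split; first exact: cst_continuous.
  by apply/seteqP; split => y //= _; apply/eqP; rewrite oner_eq0.
- by move=> O O0 _; rewrite setIT.
- by apply: continuous_subspaceT; apply/continuousP => A _; exact: D.
Qed.

Lemma discrete_sp_almost_P : discrete_sp (X := X) -> almost_P_space (R := R) (X := X).
Proof. by move=> D Z _ [x Zx]; exists x; move: (D Z); rewrite openE; apply. Qed.

End NowhereAlmostPSpace.

Theorem corollary4p1 (R : realType) (X : topologicalType) :
  @tychonoff_space R X ->
  ((@nowhere_almost_P_space R X /\ @almost_P_space R X) <-> @discrete_sp X).
Proof.
move=> _; split=> [[NAP AP]|D].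
- apply: open_set1_discrete_sp => p.
  have [U [cozU [dU indic_cont]]] := NAP p.
  rewrite (almost_P_dense_cozero_setT _ AP cozU dU) in indic_cont.
  by apply: open_set1_within_indic indic_cont; [exact: openT|].
- by split=> [p|]; [apply: discrete_sp_in_T'' | apply: discrete_sp_almost_P].
Qed.
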